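(* Let $n\ge1$, let $\mathbf u(z)\in\mathbb R^n$ be a column vector function and let $A$ be a constant real skew-symmetric $n\times n$ matrix. Define block matrices of block size $(1,n,1)\times(1,n,1)$ \[ {\cal B}_0=\begin{pmatrix} -1 & 0 & 0\\ 0 & 0 & 0\\ 0 & 0 & 1 \end{pmatrix},\quad {\cal B}_1=\begin{pmatrix} 0 & \mathbf u^T & 0\\ \mathbf u & 0 & \mathbf u\\ 0 & \mathbf u^T & 0 \end{pmatrix},\quad {\cal B}_2=\begin{pmatrix} (\mathbf u,\mathbf u) & -(\mathbf u')^T & 0\\ \mathbf u' & 0 & -\mathbf u'\\ 0 & (\mathbf u')^T & -(\mathbf u,\mathbf u)\end{pmatrix}, \] \[ {\cal B}_3=\begin{pmatrix} 0 & (\mathbf u,\mathbf u)\mathbf u^T & 0\\ (\mathbf u,\mathbf u)\mathbf u & 2\mathbf u'\mathbf u^T-2\mathbf u(\mathbf u')^T & (\mathbf u,\mathbf u)\mathbf u\\ 0 & (\mathbf u,\mathbf u)\mathbf u^T & 0 \end{pmatrix},\quad {\cal A}_0=\begin{pmatrix} 0&0&0\\ 0&A&0\\ 0&0&0 \end{pmatrix}, \] and \[ {\cal A}=-\zeta(\zeta{\cal B}_0+{\cal B}_1)+z{\cal B}_0-{\cal B}_2-\zeta^{-1}({\cal B}''_1-z{\cal B}_1-{\cal B}_3-{\cal A}_0),\qquad {\cal B}=\zeta{\cal B}_0+{\cal B}_1. \] Then the equation \[ \mathbf u'''= 3(\mathbf u,\mathbf u)\mathbf u'+z\mathbf u'+\mathbf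 u+A\mathbf u \] admits the isomonodromic Lax representation ${\cal A}'={\cal B}_\zeta+[{\cal B},{\cal A}]$.
   Context: Primes denote derivatives with respect to $z$; $\zeta$ is a spectral parameter independent of $z$; $(\cdot,\cdot)$ is the standard scalar product. ''Admits the Lax representation'' means the matrix equation holds identically in $\zeta$ by virtue of the equation. *)

From HB Require Import structures.
From mathcomp Require Import all_boot all_order all_algebra.
From mathcomp Require Import all_classical all_reals all_analysis.
Set Implicit Arguments. Unset Strict Implicit. Unset Printing Implicit Defensive.
Import Order.TTheory GRing.Theory Num.Theory.
Local Open Scope ring_scope.

Section Defs.
Variable R : realType.

Definition dotc n (v w : 'cV[R]_n) : R := (v^T *m w) 0 0.

Definition mxder p q (F : R -> 'M[R]_(p, q)) : R -> 'M[R]_(p, q) :=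
  fun z => \matrix_(i, j) derive1 (fun t => F t i j) z.

Definition mxderivable p q (F : R -> 'M[R]_(p, q)) (z : R) : Prop :=
  forall i j, derivable (fun t => F t i j) z 1.

Definition mx3 n (a11 : 'M[R]_1) (a12 : 'M[R]_(1, n)) (a13 : 'M[R]_1)
  (a21 : 'M[R]_(n, 1)) (a22 : 'M[R]_n) (a23 : 'M[R]_(n, 1))
  (a31 : 'M[R]_1) (a32 : 'M[R]_(1, n)) (a33 : 'M[R]_1) : 'M[R]_(1 + n + 1) :=
  block_mx (block_mx a11 a12 a21 a22) (col_mx a13 a23) (row_mx a31 a32) a33.

Variable n : nat.

Definition B0 : 'M[R]_(1 + n + 1) :=
  mx3 (-1)%:M 0 0 0 0 0 0 0 1%:M.

Definition B1 (u : R -> 'cV[R]_n) (z : R) : 'M[R]_(1 + n + 1) :=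
  mx3 0 (u z)^T 0 (u z) 0 (u z) 0 (u z)^T 0.

Definition B2 (u : R -> 'cV[R]_n) (z : R) : 'M[R]_(1 + n + 1) :=
  let v := u z in let w := mxder u z in let s := dotc v v in
  mx3 s%:M (- w^T) 0 w 0 (- w) 0 w^T (- s)%:M.

Definition B3 (u : R -> 'cV[R]_n) (z : R) : 'M[R]_(1 + n + 1) :=
  let v := u z in let w := mxder u z in let s := dotc v v in
  mx3 0 (s *: v^T) 0 (s *: v) (2%:R *: (w *m v^T) - 2%:R *: (v *m w^T))
      (s *: v) 0 (s *: v^T) 0.

Definition A0 (A : 'M[R]_n) : 'M[R]_(1 + n + 1) :=
  mx3 0 0 0 0 A 0 0 0 0.

Definition BB (u : R -> 'cV[R]_n) (zeta z : R) : 'M[R]_(1 + n + 1) :=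
  zeta *: B0 + B1 u z.

Definition AA (u : R -> 'cV[R]_n) (A : 'M[R]_n) (zeta z : R) : 'M[R]_(1 + n + 1) :=
  - (zeta *: (zeta *: B0 + B1 u z)) + z *: B0 - B2 u z
  - zeta^-1 *: (mxder (mxder (B1 u)) z - z *: B1 u z - B3 u z - A0 A).

End Defs.

From Pilot Require Import Defs.
From HB Require Import structures.
From mathcomp Require Import all_boot all_order all_algebra.
From mathcomp Require Import all_classical all_reals all_analysis.
From mathcomp Require Import ring.
Import Order.TTheory GRing.Theory Num.Theory.
Set Implicit Arguments. Unset Strict Implicit. Unset Printing Implicit Defensive.
Local Open Scope ring_scope.

(* The Lax equation is a Laurent polynomial identity in zeta.  Writing
   A = -zeta B + z B0 - B2 - zeta^-1 C with B = zeta B0 + B1, the zeta^2 part of [B, A]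
   vanishes and the equation splits into
     [B0, B2] = B1',   B2' = [B1, B2] + [B0, C] + z [B0, B1],   C' = [B1, C].
   All matrices involved have one of the block shapes
     mxB1 p M = (0 p^T 0; p M p; 0 p^T 0)   and   mxB2 s w = (s -w^T 0; w 0 -w; 0 w^T -s),
   both linear in their parameters, and bracketing B0 or mxB1 p 0 with these shapes
   gives these shapes again.  The first two conditions then hold for any u, and the
   vector part of the third is exactly the equation for u''', using that A and
   u' u^T - u u'^T are skew. *)

Section MatrixDerivative.
Variable R : realType.

Definition is_derive_mx p q (F : R -> 'M[R]_(p, q)) (z : R) (D : 'M[R]_(p, q)) :=
  forall i j, is_derive z 1 (fun t => F t i j) (D i j).

Section Rules.
Variables (p q : nat) (z : R).
Implicit Types (F G : R -> 'M[R]_(p, q)) (D DF DG : 'M[R]_(p, q)).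

Lemma is_derive_mx_derivable F D : is_derive_mx F z D -> mxderivable F z.
Proof. by move=> dF i j; case: (dF i j). Qed.

Lemma is_derive_mxE F D : is_derive_mx F z D -> mxder F z = D.
Proof. by move=> dF; apply/matrixP => i j; rewrite mxE derive1E; case: (dF i j). Qed.

Lemma mxderivable_is_derive_mx F : mxderivable F z -> is_derive_mx F z (mxder F z).
Proof. by move=> dF i j; rewrite mxE derive1E; apply: derivableP. Qed.

Lemma is_derive_mx_eq F D D' : is_derive_mx F z D -> D = D' -> is_derive_mx F z D'.
Proof. by move=> dF <-. Qed.

Lemma is_derive_mx_cst (C : 'M[R]_(p, q)) : is_derive_mx (fun=> C) z 0.
Proof. by move=> i j; rewrite mxE; apply: is_derive_cst. Qed.

Lemma is_derive_mxD F G DF DG : is_derive_mx F z DF -> is_derive_mx G z DG ->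
  is_derive_mx (fun t => F t + G t) z (DF + DG).
Proof.
move=> dF dG i j; rewrite mxE.
have -> : (fun t => (F t + G t) i j) = (fun t => F t i j) + (fun t => G t i j).
  by apply/funext => t; rewrite !mxE.
exact: is_deriveD.
Qed.

Lemma is_derive_mxN F DF : is_derive_mx F z DF -> is_derive_mx (fun t => - F t) z (- DF).
Proof.
move=> dF i j; rewrite mxE.
have -> : (fun t => (- F t) i j) = - (fun t => F t i j) by apply/funext => t; rewrite !mxE.
exact: is_deriveN.
Qed.

Lemma is_derive_mxB F G DF DG : is_derive_mx F z DF -> is_derive_mx G z DG ->
  is_derive_mx (fun t => F t - G t) z (DF - DG).
Proof. by move=> dF dG; apply: is_derive_mxD => //; apply: is_derive_mxN. Qed.

Lemma is_derive_mx_scale (f : R -> R) (df : R) F DF :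
  is_derive z 1 f df -> is_derive_mx F z DF ->
  is_derive_mx (fun t => f t *: F t) z (f z *: DF + df *: F z).
Proof.
move=> d_f dF i j; rewrite !mxE.
have -> : (fun t => (f t *: F t) i j) = f * (fun t => F t i j).
  by apply/funext => t; rewrite !mxE.
by apply: is_derive_eq (is_deriveM d_f (dF i j)) _; rewrite [_ *: df]mulrC.
Qed.

Lemma is_derive_mxZ (c : R) F DF :
  is_derive_mx F z DF -> is_derive_mx (fun t => c *: F t) z (c *: DF).
Proof.
move=> dF; apply: is_derive_mx_eq (is_derive_mx_scale (is_derive_cst c z 1) dF) _.
by rewrite scale0r addr0.
Qed.

Lemma is_derive_mx_tr F DF : is_derive_mx F z DF -> is_derive_mx (fun t => (F t)^T) z DF^T.
Proof.
move=> dF i j; rewrite mxE.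
by have -> : (fun t => (F t)^T i j) = (fun t => F t j i) by apply/funext => t; rewrite mxE.
Qed.

End Rules.

Lemma is_derive_mxM p q r (F : R -> 'M[R]_(p, q)) (G : R -> 'M[R]_(q, r)) z DF DG :
  is_derive_mx F z DF -> is_derive_mx G z DG ->
  is_derive_mx (fun t => F t *m G t) z (F z *m DG + DF *m G z).
Proof.
move=> dF dG i j.
have -> : (fun t => (F t *m G t) i j) = \sum_(k < q) (fun t => F t i k * G t k j).
  by rewrite fct_sumE; apply/funext => t; rewrite mxE.
rewrite !mxE -big_split /=; apply: is_derive_sum => k.
by apply: is_derive_eq (is_deriveM (dF i k) (dG k j)) _; rewrite [_ *: DF i k]mulrC.
Qed.

Lemma is_derive_mx_scalar p (f : R -> R) (z df : R) :
  is_derive z 1 f df -> is_derive_mx (fun t => (f t)%:M : 'M[R]_p) z df%:M.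
Proof.
move=> d_f i j; rewrite mxE.
have -> : (fun t => ((f t)%:M : 'M[R]_p) i j) = (i == j)%:R \*: f.
  by apply/funext => t; rewrite mxE /= -[RHS]/((i == j)%:R * f t) mulr_natl.
by apply: is_derive_eq (is_deriveZ _ d_f) _; rewrite -[LHS]/((i == j)%:R * df) mulr_natl.
Qed.

Lemma is_derive_mx_col p1 p2 q (F : R -> 'M[R]_(p1, q)) (G : R -> 'M[R]_(p2, q)) z DF DG :
  is_derive_mx F z DF -> is_derive_mx G z DG ->
  is_derive_mx (fun t => col_mx (F t) (G t)) z (col_mx DF DG).
Proof.
move=> dF dG i j; rewrite -[i]splitK; case: (fintype.split i) => k /=.
  by rewrite col_mxEu; under eq_fun do rewrite col_mxEu.
by rewrite col_mxEd; under eq_fun do rewrite col_mxEd.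
Qed.

Lemma is_derive_mx_row p q1 q2 (F : R -> 'M[R]_(p, q1)) (G : R -> 'M[R]_(p, q2)) z DF DG :
  is_derive_mx F z DF -> is_derive_mx G z DG ->
  is_derive_mx (fun t => row_mx (F t) (G t)) z (row_mx DF DG).
Proof.
move=> dF dG i j; rewrite -[j]splitK; case: (fintype.split j) => k /=.
  by rewrite row_mxEl; under eq_fun do rewrite row_mxEl.
by rewrite row_mxEr; under eq_fun do rewrite row_mxEr.
Qed.

Lemma is_derive_dotc n (v w : R -> 'cV[R]_n) z dv dw :
  is_derive_mx v z dv -> is_derive_mx w z dw ->
  is_derive z 1 (fun t => dotc (v t) (w t)) (dotc (v z) dw + dotc dv (w z)).
Proof.
move=> d_v d_w; apply: is_derive_eq (is_derive_mxM (is_derive_mx_tr d_v) d_w 0 0) _.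
by rewrite [LHS]mxE.
Qed.

Lemma is_derive_mx_affine p q (B C : 'M[R]_(p, q)) (zeta : R) :
  is_derive_mx (fun x => x *: B + C) zeta B.
Proof.
apply: is_derive_mx_eq.
  exact: is_derive_mxD (is_derive_mx_scale (is_derive_id _ _) (is_derive_mx_cst _ _))
                       (is_derive_mx_cst _ _).
by rewrite scaler0 add0r addr0 scale1r.
Qed.

End MatrixDerivative.

Section Blocks.
Variables (R : realType) (n : nat).
Local Notation mx3 := (@mx3 R n).

Lemma is_derive_mx3 (F11 : R -> 'M[R]_1) (F12 : R -> 'M[R]_(1, n)) (F13 : R -> 'M[R]_1)
    (F21 : R -> 'M[R]_(n, 1)) (F22 : R -> 'M[R]_n) (F23 : R -> 'M[R]_(n, 1))
    (F31 : R -> 'M[R]_1) (F32 : R -> 'M[R]_(1, n)) (F33 : R -> 'M[R]_1)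
    z D11 D12 D13 D21 D22 D23 D31 D32 D33 :
  is_derive_mx F11 z D11 -> is_derive_mx F12 z D12 -> is_derive_mx F13 z D13 ->
  is_derive_mx F21 z D21 -> is_derive_mx F22 z D22 -> is_derive_mx F23 z D23 ->
  is_derive_mx F31 z D31 -> is_derive_mx F32 z D32 -> is_derive_mx F33 z D33 ->
  is_derive_mx (fun t => mx3 (F11 t) (F12 t) (F13 t) (F21 t) (F22 t) (F23 t)
                             (F31 t) (F32 t) (F33 t)) z
               (mx3 D11 D12 D13 D21 D22 D23 D31 D32 D33).
Proof.
move=> *; rewrite /Defs.mx3 /block_mx.
by repeat first [assumption | apply: is_derive_mx_col | apply: is_derive_mx_row].
Qed.

Lemma mx3D a11 a12 a13 a21 a22 a23 a31 a32 a33 b11 b12 b13 b21 b22 b23 b31 b32 b33 :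
  mx3 a11 a12 a13 a21 a22 a23 a31 a32 a33 + mx3 b11 b12 b13 b21 b22 b23 b31 b32 b33
  = mx3 (a11 + b11) (a12 + b12) (a13 + b13) (a21 + b21) (a22 + b22) (a23 + b23)
        (a31 + b31) (a32 + b32) (a33 + b33).
Proof. by rewrite /Defs.mx3 !add_block_mx add_col_mx add_row_mx. Qed.

Lemma mx3Z (c : R) a11 a12 a13 a21 a22 a23 a31 a32 a33 :
  c *: mx3 a11 a12 a13 a21 a22 a23 a31 a32 a33
  = mx3 (c *: a11) (c *: a12) (c *: a13) (c *: a21) (c *: a22) (c *: a23)
        (c *: a31) (c *: a32) (c *: a33).
Proof. by rewrite /Defs.mx3 !scale_block_mx scale_col_mx scale_row_mx. Qed.

Lemma mx3N a11 a12 a13 a21 a22 a23 a31 a32 a33 :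
  - mx3 a11 a12 a13 a21 a22 a23 a31 a32 a33
  = mx3 (- a11) (- a12) (- a13) (- a21) (- a22) (- a23) (- a31) (- a32) (- a33).
Proof. by rewrite -scaleN1r mx3Z !scaleN1r. Qed.

Lemma mul_mx3 a11 a12 a13 a21 a22 a23 a31 a32 a33 b11 b12 b13 b21 b22 b23 b31 b32 b33 :
  mx3 a11 a12 a13 a21 a22 a23 a31 a32 a33 *m mx3 b11 b12 b13 b21 b22 b23 b31 b32 b33
  = mx3 (a11 *m b11 + a12 *m b21 + a13 *m b31)
        (a11 *m b12 + a12 *m b22 + a13 *m b32)
        (a11 *m b13 + a12 *m b23 + a13 *m b33)
        (a21 *m b11 + a22 *m b21 + a23 *m b31)
        (a21 *m b12 + a22 *m b22 + a23 *m b32)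
        (a21 *m b13 + a22 *m b23 + a23 *m b33)
        (a31 *m b11 + a32 *m b21 + a33 *m b31)
        (a31 *m b12 + a32 *m b22 + a33 *m b32)
        (a31 *m b13 + a32 *m b23 + a33 *m b33).
Proof.
rewrite /Defs.mx3 !mulmx_block mul_col_row mul_block_col mul_col_mx mul_row_block.
by rewrite mul_mx_row mul_row_col !add_block_mx add_col_mx add_row_mx.
Qed.

End Blocks.

Definition mxbracket (R : pzRingType) m (X Y : 'M[R]_m) := X *m Y - Y *m X.

Section LaxAnsatz.
Variables (R : realType) (m : nat).
Variables (P0 : 'M[R]_m) (P1 P2 Q : R -> 'M[R]_m).

Definition lax_ansatz (zeta z : R) : 'M[R]_m :=
  - (zeta *: (zeta *: P0 + P1 z)) + z *: P0 - P2 z - zeta^-1 *: Q z.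

Lemma is_derive_lax_ansatz (zeta z : R) D1 D2 DQ :
  zeta != 0 ->
  is_derive_mx P1 z D1 -> is_derive_mx P2 z D2 -> is_derive_mx Q z DQ ->
  mxbracket P0 (P2 z) = D1 ->
  mxbracket (P1 z) (P2 z) + mxbracket P0 (Q z) + z *: mxbracket P0 (P1 z) = D2 ->
  mxbracket (P1 z) (Q z) = DQ ->
  is_derive_mx (lax_ansatz zeta) z
    (P0 + mxbracket (zeta *: P0 + P1 z) (lax_ansatz zeta z)).
Proof.
move=> zeta_neq0 dP1 dP2 dQ eqD1 eqD2 eqDQ; rewrite /lax_ansatz.
apply: is_derive_mx_eq.
  repeat first [ apply: is_derive_mxB | apply: is_derive_mxD | apply: is_derive_mxN
               | apply: is_derive_mxZ | apply: is_derive_mx_scale | apply: is_derive_mx_cst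
               | apply: is_derive_id | eassumption ].
rewrite -eqD1 -eqD2 -eqDQ /mxbracket.
rewrite !(mulmxDl, mulmxDr, mulmxBl, mulmxBr, mulNmx, mulmxN, =^~ scalemxAl, =^~ scalemxAr).
by apply/matrixP => i j; rewrite !mxE; field.
Qed.

End LaxAnsatz.

Section Shapes.
Variables (R : realType) (n : nat).
Implicit Types (p q v w : 'cV[R]_n) (M N : 'M[R]_n) (s : R).

Lemma dotcC v w : dotc v w = dotc w v.
Proof. by rewrite /dotc -[v^T *m w]trmxK trmx_mul trmxK mxE. Qed.

Lemma tr_mul_dotc v w : v^T *m w = (dotc v w)%:M.
Proof. by apply/matrixP => i j; rewrite [i]ord1 [j]ord1 [RHS]mxE eqxx mulr1n. Qed.

Lemma mul_outer_mx p q v : p *m q^T *m v = dotc q v *: p.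
Proof. by rewrite -mulmxA tr_mul_dotc mul_mx_scalar. Qed.

Ltac mx_blocks :=
  rewrite ?(mul0mx, mulmx0, scaler0, addr0, add0r, oppr0, subr0, sub0r);
  rewrite ?(mulmxN, mulNmx, mul_scalar_mx, mul_mx_scalar, =^~ scalemxAl, =^~ scalemxAr);
  rewrite ?tr_mul_dotc;
  let i := fresh "i" in let j := fresh "j" in
  apply/matrixP => i j; try rewrite [i]ord1; try rewrite [j]ord1;
  rewrite !mxE ?eqxx ?mulr1n.

Definition mxB1 p M : 'M[R]_(1 + n + 1) := mx3 0 p^T 0 p M p 0 p^T 0.
Definition mxB2 s w : 'M[R]_(1 + n + 1) := mx3 s%:M (- w^T) 0 w 0 (- w) 0 w^T (- s)%:M.

Lemma mxbracket_B0_mxB2 s w : mxbracket (B0 R n) (mxB2 s w) = mxB1 w 0.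
Proof.
rewrite /mxbracket /B0 /mxB2 /mxB1 !mul_mx3 mx3N mx3D.
by congr mx3; mx_blocks; ring.
Qed.

Lemma mxbracket_B0_mxB1 p M : mxbracket (B0 R n) (mxB1 p M) = mxB2 0 p.
Proof.
rewrite /mxbracket /B0 /mxB2 /mxB1 !mul_mx3 mx3N mx3D.
by congr mx3; mx_blocks; ring.
Qed.

Lemma mxbracket_mxB1_mxB2 p s w :
  mxbracket (mxB1 p 0) (mxB2 s w) = mxB2 (2 * dotc p w) (s *: p).
Proof.
rewrite /mxbracket /mxB2 /mxB1 !mul_mx3 mx3N mx3D.
by congr mx3; mx_blocks; rewrite ?[dotc w p]dotcC; ring.
Qed.

Lemma mxbracket_mxB1 p q N : N^T = - N ->
  mxbracket (mxB1 p 0) (mxB1 q N) = mxB1 (- (N *m p)) (2 *: (p *m q^T - q *m p^T)).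
Proof.
move=> skewN; have trN : p^T *m N = - (N *m p)^T by rewrite trmx_mul skewN mulmxN opprK.
rewrite /mxbracket /mxB1 !mul_mx3 mx3N mx3D trN.
by congr mx3; mx_blocks; rewrite ?[dotc q p]dotcC; ring.
Qed.

Lemma mxB1D p q M N : mxB1 p M + mxB1 q N = mxB1 (p + q) (M + N).
Proof. by rewrite /mxB1 mx3D !addr0 linearD. Qed.

Lemma mxB1N p M : - mxB1 p M = mxB1 (- p) (- M).
Proof. by rewrite /mxB1 mx3N oppr0 linearN. Qed.

Lemma mxB1Z c p M : c *: mxB1 p M = mxB1 (c *: p) (c *: M).
Proof. by rewrite /mxB1 mx3Z scaler0 linearZ. Qed.

Lemma mxB2D s1 s2 w1 w2 : mxB2 s1 w1 + mxB2 s2 w2 = mxB2 (s1 + s2) (w1 + w2).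
Proof. by rewrite /mxB2 mx3D; congr mx3; mx_blocks; ring. Qed.

Lemma mxB2Z c s w : c *: mxB2 s w = mxB2 (c * s) (c *: w).
Proof. by rewrite /mxB2 mx3Z; congr mx3; mx_blocks; ring. Qed.

Lemma is_derive_mxB1 (P : R -> 'cV[R]_n) (M : R -> 'M[R]_n) z DP DM :
  is_derive_mx P z DP -> is_derive_mx M z DM ->
  is_derive_mx (fun t => mxB1 (P t) (M t)) z (mxB1 DP DM).
Proof.
move=> dP dM; apply: is_derive_mx3;
  first [exact: is_derive_mx_cst | exact: is_derive_mx_tr | done].
Qed.

Lemma is_derive_mxB2 (s : R -> R) (w : R -> 'cV[R]_n) (z ds : R) dw :
  is_derive z 1 s ds -> is_derive_mx w z dw ->
  is_derive_mx (fun t => mxB2 (s t) (w t)) z (mxB2 ds dw).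
Proof.
move=> d_s d_w; apply: is_derive_mx3;
  first [ done | exact: is_derive_mx_cst | exact: is_derive_mx_scalar
        | exact: is_derive_mx_tr | exact: is_derive_mxN
        | exact/is_derive_mxN/is_derive_mx_tr | exact/is_derive_mx_scalar/is_deriveN ].
Qed.

Lemma B1E (u : R -> 'cV[R]_n) t : B1 u t = mxB1 (u t) 0.
Proof. by []. Qed.

Lemma B2E (u : R -> 'cV[R]_n) t : B2 u t = mxB2 (dotc (u t) (u t)) (mxder u t).
Proof. by []. Qed.

Lemma B3E (u : R -> 'cV[R]_n) t :
  B3 u t = mxB1 (dotc (u t) (u t) *: u t)
                (2%:R *: (mxder u t *m (u t)^T - u t *m (mxder u t)^T)).
Proof. by rewrite /B3 /mxB1 /= [(_ *: u t)^T]linearZ scalerBr. Qed.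

Lemma A0E (A : 'M[R]_n) : A0 A = mxB1 0 A.
Proof. by rewrite /A0 /mxB1 trmx0. Qed.

Lemma is_derive_B1 (u : R -> 'cV[R]_n) z du :
  is_derive_mx u z du -> is_derive_mx (B1 u) z (mxB1 du 0).
Proof. by move=> d_u; apply: is_derive_mxB1 d_u (is_derive_mx_cst _ _). Qed.

Lemma mxder_B1 (u : R -> 'cV[R]_n) :
  (forall t, mxderivable u t) -> mxder (B1 u) = B1 (mxder u).
Proof.
by move=> d_u; apply/funext => t; apply/is_derive_mxE/is_derive_B1/mxderivable_is_derive_mx.
Qed.

End Shapes.

Section IsomonodromicLax.
Variables (R : realType) (n : nat) (A : 'M[R]_n) (u : R -> 'cV[R]_n).
Hypothesis skewA : A^T = - A.
Hypothesis u_derivable : forall z,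
  mxderivable u z /\ mxderivable (mxder u) z /\ mxderivable (mxder (mxder u)) z.
Hypothesis u_ode : forall z, mxder (mxder (mxder u)) z =
  (3%:R * dotc (u z) (u z)) *: mxder u z + z *: mxder u z + u z + A *m u z.

Local Notation u1 := (mxder u).
Local Notation u2 := (mxder u1).
Local Notation u3 := (mxder u2).
Let s t := dotc (u t) (u t).
Let K t := 2%:R *: (u1 t *m (u t)^T - u t *m (u1 t)^T).
Let C t := mxder (mxder (B1 u)) t - t *: B1 u t - B3 u t - A0 A.

Let d_u z : is_derive_mx u z (u1 z) := mxderivable_is_derive_mx (u_derivable z).1.
Let d_u1 z : is_derive_mx u1 z (u2 z) := mxderivable_is_derive_mx (u_derivable z).2.1.
Let d_u2 z : is_derive_mx u2 z (u3 z) := mxderivable_is_derive_mx (u_derivable z).2.2.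

Lemma is_derive_s (z : R) : is_derive z 1 s (2 * dotc (u z) (u1 z)).
Proof.
apply: is_derive_eq (is_derive_dotc (d_u z) (d_u z)) _.
by rewrite [dotc (u1 z) _]dotcC mulr2n mulrDl mul1r.
Qed.

Lemma is_derive_K (z : R) : is_derive_mx K z (2%:R *: (u2 z *m (u z)^T - u z *m (u2 z)^T)).
Proof.
apply: is_derive_mx_eq.
  by apply/is_derive_mxZ/is_derive_mxB; apply: is_derive_mxM => //; apply: is_derive_mx_tr.
by rewrite [u z *m _ + _]addrC opprD addrACA subrr add0r.
Qed.

Lemma K_skew t : (K t)^T = - K t.
Proof. by rewrite linearZ linearB /= !trmx_mul !trmxK -scalerN opprB. Qed.

Lemma C_mxB1 t : C t = mxB1 (u2 t - (t + s t) *: u t) (- K t - A).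
Proof.
rewrite /C (mxder_B1 (fun t => (u_derivable t).1)) (mxder_B1 (fun t => (u_derivable t).2.1)).
rewrite !B1E B3E A0E mxB1Z !mxB1N !mxB1D scaler0 oppr0 !add0r oppr0 addr0.
by rewrite sub0r [(t + _) *: _]scalerDl opprD addrA.
Qed.

Lemma is_derive_C (z : R) :
  is_derive_mx C z
    (mxB1 (u3 z - ((z + s z) *: u1 z + (1 + 2 * dotc (u z) (u1 z)) *: u z))
          (- (2%:R *: (u2 z *m (u z)^T - u z *m (u2 z)^T)))).
Proof.
have -> : C = fun t => mxB1 (u2 t - (t + s t) *: u t) (- K t - A).
  by apply/funext => t; exact: C_mxB1.
have d_coef : is_derive z 1 (fun t => t + s t) (1 + 2 * dotc (u z) (u1 z)).
  exact: is_deriveD (is_derive_id z 1) (is_derive_s z).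
apply: is_derive_mx_eq.
  apply: is_derive_mxB1; first exact: is_derive_mxB (d_u2 z) (is_derive_mx_scale d_coef (d_u z)).
  exact: is_derive_mxB (is_derive_mxN (is_derive_K z)) (is_derive_mx_cst _ _).
by rewrite subr0.
Qed.

Lemma lax_coef0 (z : R) :
  mxbracket (B1 u z) (B2 u z) + mxbracket (B0 R n) (C z) + z *: mxbracket (B0 R n) (B1 u z)
  = mxB2 (2 * dotc (u z) (u1 z)) (u2 z).
Proof.
rewrite B1E B2E C_mxB1 mxbracket_mxB1_mxB2 !mxbracket_B0_mxB1 mxB2Z !mxB2D.
rewrite mulr0 !addr0; congr mxB2.
by rewrite /s; apply/matrixP => i j; rewrite !mxE; ring.
Qed.

Lemma lax_coefV (z : R) :
  mxbracket (B1 u z) (C z) =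
  mxB1 (u3 z - ((z + s z) *: u1 z + (1 + 2 * dotc (u z) (u1 z)) *: u z))
       (- (2%:R *: (u2 z *m (u z)^T - u z *m (u2 z)^T))).
Proof.
have skew_coef : (- K z - A)^T = - (- K z - A).
  by rewrite linearB /= linearN /= K_skew skewA opprD.
rewrite B1E C_mxB1 (mxbracket_mxB1 _ _ skew_coef); congr mxB1.
  rewrite u_ode mulmxBl mulNmx /K -scalemxAl mulmxBl !mul_outer_mx [dotc (u1 z) _]dotcC.
  by rewrite /s; apply/matrixP => i j; rewrite !mxE; ring.
by apply/matrixP => i j; rewrite !mxE !big_ord1 !mxE; ring.
Qed.

End IsomonodromicLax.

Theorem mainTheorem12 (R : realType) (n : nat) (hn : (1 <= n)%N)
  (A : 'M[R]_n) (u : R -> 'cV[R]_n) :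
  A^T = - A ->
  (forall z, mxderivable u z /\ mxderivable (mxder u) z
             /\ mxderivable (mxder (mxder u)) z) ->
  (forall z, mxder (mxder (mxder u)) z =
      (3%:R * dotc (u z) (u z)) *: mxder u z + z *: mxder u z + u z + A *m u z) ->
  forall zeta z : R, zeta != 0 ->
    mxderivable (fun t => AA u A zeta t) z /\
    mxder (fun t => AA u A zeta t) z =
      mxder (fun x => BB u x z) zeta
      + (BB u zeta z *m AA u A zeta z - AA u A zeta z *m BB u zeta z).
Proof.
move=> skewA u_derivable u_ode zeta z zeta_neq0.
have d_u := mxderivable_is_derive_mx (u_derivable z).1.
have d_u1 := mxderivable_is_derive_mx (u_derivable z).2.1.
have dAA : is_derive_mx (fun t => AA u A zeta t) z
                        (B0 R n + mxbracket (BB u zeta z) (AA u A zeta z)).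
  apply: (is_derive_lax_ansatz zeta_neq0 (is_derive_B1 d_u)
            (is_derive_mxB2 (is_derive_s u_derivable z) d_u1) (is_derive_C A u_derivable z)).
  - exact: mxbracket_B0_mxB2.
  - exact: lax_coef0.
  - exact: lax_coefV.
split; first exact: is_derive_mx_derivable dAA.
by rewrite (is_derive_mxE dAA) (is_derive_mxE (is_derive_mx_affine _ _ _)).
Qed.
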